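(* Within the pseudovariety $\mathsf S$ of all finite semigroups, each of the sets of pseudoidentities $\Sigma=\{(xyx)^\omega=x^\omega,\ x^{\omega+1}=x\}$ and $\Gamma=\{(xy)^\omega x=x\}$ is h-strong.
   Context: $\mathsf S$ is the pseudovariety of finite semigroups (signature: multiplication); $\Omega_A\mathsf S$ is the free profinite semigroup on a finite set $A$. In a profinite semigroup $x^\omega=\lim x^{n!}$ and $x^{\omega+1}=x^\omega x$. An $\mathsf S$-pseudoidentity is $u=v$ with $u,v\in\Omega_B\mathsf S$, $B$ finite; it holds in a finite semigroup $T$ if both sides agree under every continuous homomorphism $\Omega_B\mathsf S\to T$; $[\![\Sigma]\!]$ is the class of finite semigroups satisfying $\Sigma$. Provability: for finite $A$, $\Sigma_0\subseteq\Omega_A\mathsf S\times\Omega_A\mathsf S$ is the set of pairs $(\mathbf t(\varphi(u),w_1,\dots,w_n),\mathbf t(\varphi(v),w_1,\dots,w_n))$ with $u=v$ or $v=u$ in $\Sigma$ ($u,v\in\Omega_B\mathsf S$), $\varphi:\Omega_B\mathsf S\to\Omega_A\mathsf S$ a continuous homomorphism, $\mathbf t$ a semigroup term, $w_i\in\Omega_A\mathsf S$; $\Sigma_{2\alpha+1}$ is the transitive closure of $\Sigma_{2\alpha}$, $\Sigma_{2\alpha+2}$ the topological closure of $\Sigma_{2\alpha+1}$, unions at limit ordinals; $u=v$ is provable from $\Sigma$ if $(u,v)\in\bigcup_\alpha\Sigma_\alpha$. $\Sigma$ is h-strong within $\mathsf S$ if every $\mathsf S$-pseudoidentity valid in $[\![\Sigma]\!]$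 is provable from $\Sigma$. *)

From mathcomp Require Import all_boot.
Set Implicit Arguments.
Unset Strict Implicit.
Unset Printing Implicit Defensive.

(* Finite semigroups with carrier 'I_n (every finite semigroup is isomorphic
   to one of these). *)
Record fsg := FSg {
  fsg_n : nat;
  fsg_mul : 'I_fsg_n -> 'I_fsg_n -> 'I_fsg_n;
  fsg_assoc : associative fsg_mul }.

Definition shom (S1 S2 : fsg) (h : 'I_(fsg_n S1) -> 'I_(fsg_n S2)) :=
  forall x y, h (fsg_mul x y) = fsg_mul (h x) (h y).

Definition natural (A : Type)
  (f : forall S : fsg, (A -> 'I_(fsg_n S)) -> 'I_(fsg_n S)) :=
  forall (S1 S2 : fsg) (h : 'I_(fsg_n S1) -> 'I_(fsg_n S2)),
    shom h -> forall a, h (f S1 a) = f S2 (h \o a).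

(* Omega_A S : the free profinite semigroup on A, realised (Reiterman) as the
   set of A-ary implicit operations on S, with the product topology of
   prod_{(S,a)} S (each finite S discrete). *)
Definition Om (A : finType) :=
  {f : forall S : fsg, (A -> 'I_(fsg_n S)) -> 'I_(fsg_n S) | natural f}.

Definition ev (A : finType) (u : Om A) (S : fsg) (a : A -> 'I_(fsg_n S)) :=
  proj1_sig u S a.

Definition coord (A : finType) := {S : fsg & A -> 'I_(fsg_n S)}.
Definition evc (A : finType) (u : Om A) (c : coord A) := ev u (projT2 c).

(* u and v agree on all coordinates of the finite list L (basic nbhds) *)
Fixpoint agree (A : finType) (L : seq (coord A)) (u v : Om A) : Prop :=
  match L with
  | [::] => True
  | c :: L' => evc u c = evc v c /\ agree L' u v
  end.

Lemma om_mul_natural (A : finType) (u v : Om A) :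
  natural (fun S a => fsg_mul (ev u a) (ev v a)).
Proof.
move=> S1 S2 h hh a; rewrite hh /ev.
by rewrite (proj2_sig u _ _ _ hh) (proj2_sig v _ _ _ hh).
Qed.

Definition om_mul (A : finType) (u v : Om A) : Om A :=
  exist _ _ (om_mul_natural u v).

Lemma om_var_natural (A : finType) (b : A) :
  natural (fun S (a : A -> 'I_(fsg_n S)) => a b).
Proof. by []. Qed.

Definition om_var (A : finType) (b : A) : Om A := exist _ _ (om_var_natural b).

(* om_pow u n = u^(n+1) *)
Fixpoint om_pow (A : finType) (u : Om A) (n : nat) : Om A :=
  match n with 0 => u | n'.+1 => om_mul (om_pow u n') u end.

Definition converges (A : finType) (s : nat -> Om A) (l : Om A) :=
  forall c : coord A, exists N, forall k, N <= k -> evc (s k) c = evc l c.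

(* e = u^omega = lim u^(k!) *)
Definition is_omega (A : finType) (u e : Om A) :=
  converges (fun k => om_pow u (k`!).-1) e.

Definition is_hom (B A : finType) (phi : Om B -> Om A) :=
  forall u v, phi (om_mul u v) = om_mul (phi u) (phi v).
Definition is_cont (B A : finType) (phi : Om B -> Om A) :=
  forall (c : coord A) (u : Om B), exists L : seq (coord B),
    forall u', agree L u' u -> evc (phi u') c = evc (phi u) c.

Definition is_homT (B : finType) (T : Type) (mul : T -> T -> T) (f : Om B -> T) :=
  forall u v, f (om_mul u v) = mul (f u) (f v).
Definition is_contT (B : finType) (T : Type) (f : Om B -> T) :=
  forall u : Om B, exists L : seq (coord B), forall u', agree L u' u -> f u' = f u.

Definition pid := {B : finType & (Om B * Om B)%type}.

Definition holds (T : finType) (mul : T -> T -> T) (B : finType) (u v : Om B) :=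
  forall f : Om B -> T, is_homT mul f -> is_contT f -> f u = f v.

Definition models (T : finType) (mul : T -> T -> T) (Sigma : pid -> Prop) :=
  forall p : pid, Sigma p -> holds mul (projT2 p).1 (projT2 p).2.

(* semigroup terms t(z, w_1, ..., w_n): leaves are the hole z or some w_i *)
Inductive sterm (A : finType) :=
  | Hole
  | Lf of Om A
  | Mu of sterm A & sterm A.

Fixpoint st_eval (A : finType) (t : sterm A) (z : Om A) : Om A :=
  match t with
  | Hole => z
  | Lf w => w
  | Mu t1 t2 => om_mul (st_eval t1 z) (st_eval t2 z)
  end.

Definition Sigma0 (Sigma : pid -> Prop) (A : finType) (u v : Om A) :=
  exists (q : pid) (phi : Om (projT1 q) -> Om A) (t : sterm A),
    [/\ Sigma q, is_hom phi, is_cont phi &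
      ((u = st_eval t (phi (projT2 q).1) /\ v = st_eval t (phi (projT2 q).2))
       \/ (u = st_eval t (phi (projT2 q).2) /\ v = st_eval t (phi (projT2 q).1)))].

(* provability: the union over all ordinals alpha of Sigma_alpha, i.e. the
   least relation containing Sigma_0 closed under transitive closure and
   topological closure in Omega_A S x Omega_A S. *)
Inductive provable (Sigma : pid -> Prop) (A : finType) : Om A -> Om A -> Prop :=
  | pr_base u v : Sigma0 Sigma u v -> provable Sigma u v
  | pr_trans u v w : provable Sigma u v -> provable Sigma v w -> provable Sigma u w
  | pr_clos u v :
      (forall L : seq (coord A), exists u' v',
          [/\ provable Sigma u' v', agree L u' u & agree L v' v]) ->
      provable Sigma u v.

Definition h_strong (Sigma : pid -> Prop) :=
  forall (A : finType) (u v : Om A),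
    (forall (T : finType) (mul : T -> T -> T), associative mul ->
       models mul Sigma -> holds mul u v) ->
    provable Sigma u v.

Definition mkpid (B : finType) (u v : Om B) : pid := existT _ B (u, v).

Definition SigmaSet (p : pid) : Prop :=
  (exists e1 e2 : Om bool,
     [/\ is_omega (om_mul (om_mul (om_var true) (om_var false)) (om_var true)) e1,
         is_omega (om_var true) e2 & p = mkpid e1 e2])
  \/ (exists e : Om unit,
     is_omega (om_var tt) e /\ p = mkpid (om_mul e (om_var tt)) (om_var tt)).

Definition GammaSet (p : pid) : Prop :=
  exists e : Om bool,
    is_omega (om_mul (om_var true) (om_var false)) e
    /\ p = mkpid (om_mul e (om_var true)) (om_var true).

From mathcomp Require Import all_boot zify.
From Stdlib Require Import Setoid Morphisms.
From Stdlib Require Import ClassicalEpsilon ProofIrrelevance FunctionalExtensionality.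
Set Implicit Arguments.
Unset Strict Implicit.
Unset Printing Implicit Defensive.

(* Both Σ and Γ prove x^ω x = x and (x y)^ω x = x, and these two identities
   hold exactly in the completely simple semigroups, which satisfy Σ and Γ.
   Fix an idempotent pseudoword e such that, in every finite semigroup,
   (e g e)^ω = e for each letter g and each product g = y^ω x^ω of letter
   idempotents; it is the stable value of the iteration r |-> (r g r)^ω.
   From the two identities one proves
     w = x^ω e (e x^ω e)^(ω-1) . e w e . (e y^ω e)^(ω-1) e y^ω
   with x, y the first and last letters of w, and that e w e equals its value
   in a Rees matrix semigroup over the maximal subgroup at e, with sandwich
   entries P(y, x) = (e y^ω e)^(ω-1) e y^ω x^ω e (e x^ω e)^(ω-1).  That Rees
   matrix semigroup is completely simple, so it satisfies every u = v valid in
   [[Σ]]; hence u and v have the same first and last letters and the same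
   middle part, and u = v is provable. *)

(** * Powers in a finite semigroup *)

Lemma pigeonhole_nat (T : finType) (f : nat -> T) :
  exists i j, [/\ i < j, j <= #|T| & f i = f j].
Proof.
have : ~~ injectiveb (fun k : 'I_#|T|.+1 => f k).
  by apply/injectiveP => /leq_card; rewrite card_ord ltnn.
case/injectivePn => k1 [k2 ne eq12].
have [k1T k2T] := (ltn_ord k1, ltn_ord k2).
case: (ltngtP k1 k2) => [lt12|lt21|/val_inj e12]; last by rewrite e12 eqxx in ne.
- by exists k1, k2.
- by exists k2, k1.
Qed.

Section Powers.
Variables (T : finType) (mul : T -> T -> T).
Hypothesis mulA : associative mul.

(* [spow s k] is [s ^ k.+1], matching the convention of [om_pow]. *)
Fixpoint spow (s : T) (k : nat) : T := if k is k'.+1 then mul (spow s k') s else s.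

Definition idem (x : T) := mul x x = x.

Lemma spowD s i j : mul (spow s i) (spow s j) = spow s (i + j).+1.
Proof. by elim: j => [|j IH] /=; rewrite ?addn0 // mulA IH addnS. Qed.

Lemma spowSl s j : mul s (spow s j) = spow s j.+1.
Proof. exact: (spowD s 0 j). Qed.

Lemma spowC s i j : mul (spow s i) (spow s j) = mul (spow s j) (spow s i).
Proof. by rewrite !spowD addnC. Qed.

Lemma spow_spow s i j : spow (spow s i) j = spow s (i.+1 * j.+1).-1.
Proof.
elim: j => [|j IH]; first by rewrite muln1.
rewrite [LHS]/= IH spowD; congr (spow s _).
by rewrite (mulnS i.+1 j.+1); have := muln_gt0 i.+1 j.+1; lia.
Qed.

Lemma spow_fixl e s k : mul e s = s -> mul e (spow s k) = spow s k.
Proof. by move=> es; elim: k => //= k IH; rewrite mulA IH. Qed.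

Lemma spow_fixr e s k : mul s e = s -> mul (spow s k) e = spow s k.
Proof. by move=> se; elim: k => //= k IH; rewrite -mulA se. Qed.

Lemma spow_idem x k : idem x -> spow x k = x.
Proof. by move=> hx; elim: k => //= k ->. Qed.

Lemma idem_spow_uniq s i j : idem (spow s i) -> idem (spow s j) -> spow s i = spow s j.
Proof.
by move=> hi hj; rewrite -{1}(spow_idem j hi) spow_spow mulnC -spow_spow spow_idem.
Qed.

Lemma spow_eventually_periodic s : exists i p, [/\ 0 < p, i < #|T|, p <= #|T| &
  forall m, i <= m -> spow s (m + p) = spow s m].
Proof.
have [k1 [k2 [lt12 k2T eq12]]] := pigeonhole_nat (spow s).
exists k1, (k2 - k1); split; [lia | lia | lia |].
move=> m /subnKC <-; elim: (m - k1) => [|d IH]; first by rewrite addn0 subnKC ?(ltnW lt12).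
by rewrite addnS [in LHS]addSn [LHS]/= IH.
Qed.

Section Omega.
Variable M : nat.
Hypothesis cardT : #|T| <= M.
Let N := M`!.
Let N_gt0 : 0 < N := fact_gt0 M.

Lemma spow_periodic s : exists2 i, i < N & forall m, i <= m -> spow s (m + N) = spow s m.
Proof.
have [i [p [p_gt0 iT pT per]]] := spow_eventually_periodic s.
exists i; first by have := fact_geq M; lia.
have /dvdnP [k ->] : p %| N by apply: dvdn_fact; lia.
move=> m im; elim: k => [|k IH]; first by rewrite addn0.
by rewrite mulSn addnCA addnC per ?IH //; lia.
Qed.

Definition omega s := spow s N.-1.
Definition omega_inv s := spow s N.*2.-2.

Lemma omega_idem s : idem (omega s).
Proof.
have [i iN per] := spow_periodic s.
rewrite /idem /omega spowD -[RHS]per; last lia.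
congr (spow s _); lia.
Qed.

Lemma omega_uniq s k : idem (spow s k) -> spow s k = omega s.
Proof. by move=> h; apply: idem_spow_uniq (omega_idem s). Qed.

Lemma mul_omega_inv s : mul s (omega_inv s) = omega s.
Proof.
have [i iN per] := spow_periodic s.
rewrite spowSl /omega -[RHS]per; last lia.
congr (spow s _); lia.
Qed.

Lemma omega_inv_mul s : mul (omega_inv s) s = omega s.
Proof. by rewrite -mul_omega_inv -[s in mul _ s]/(spow s 0) spowC. Qed.

Lemma omega_mulC s : mul (omega s) s = mul s (omega s).
Proof. exact: (spowC s _ 0). Qed.

Lemma omega_inv_omega s : mul (omega_inv s) (omega s) = omega_inv s.
Proof.
have [i iN per] := spow_periodic s.
rewrite spowD -[RHS]per; last lia.
congr (spow s _); lia.
Qed.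

Lemma spow_shift s t k : mul (spow (mul s t) k) s = mul s (spow (mul t s) k).
Proof. by elim: k => [|k IH] /=; rewrite ?mulA // -!mulA [LHS]mulA IH -mulA. Qed.

Lemma omega_shift s t : mul (omega (mul s t)) s = mul s (omega (mul t s)).
Proof. exact: spow_shift. Qed.

Lemma omega_sq s : omega (mul s s) = omega s.
Proof.
rewrite /omega (_ : mul s s = spow s 1) // spow_spow //.
by apply: omega_uniq => //; rewrite -spow_spow //; apply: omega_idem.
Qed.

Section Idempotent.
Variable E : T.
Hypothesis idemE : idem E.

Lemma spow_sandwich s k : spow (mul (mul E s) E) k = mul (spow (mul E s) k) E.
Proof.
elim: k => [|k IH] //=.
by rewrite IH -!mulA (mulA E E) idemE (mulA E s E) (mulA (spow _ k)).
Qed.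

Lemma omega_inv_sandwich s :
  mul (mul (mul s E) (omega_inv (mul (mul E s) E))) (mul E s) = mul s (omega (mul E s)).
Proof.
have -> : omega_inv (mul (mul E s) E) = mul (omega_inv (mul E s)) E.
  by rewrite /omega_inv spow_sandwich.
have Ei : mul E (omega_inv (mul E s)) = omega_inv (mul E s).
  by apply: spow_fixl; rewrite mulA idemE.
rewrite -omega_inv_mul // -!mulA; congr (mul s _).
by rewrite (mulA E) Ei (mulA E E) idemE.
Qed.

End Idempotent.

End Omega.

(* Unlike [omega_inv M s], this does not mention the bound [M], which makes
   [omega_inv] commute with morphisms. *)
Definition is_omega_inv s y :=
  exists k, [/\ y = spow s k, idem (spow s k.+1) & mul y (spow s k.+1) = y].

Lemma is_omega_inv_uniq s y1 y2 : is_omega_inv s y1 -> is_omega_inv s y2 -> y1 = y2.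
Proof.
move=> [k1 [-> i1 e1]] [k2 [-> i2 e2]].
rewrite -e1 -e2 (idem_spow_uniq i1 i2) spowD.
by rewrite -(idem_spow_uniq i1 i2) spowD !addnS addnC.
Qed.

Lemma omega_inv_is_omega_inv M s : #|T| <= M -> is_omega_inv s (omega_inv M s).
Proof.
move=> cardT; exists (M`!.*2).-2.
by rewrite -spowSl mul_omega_inv // omega_inv_omega //; split=> //; apply: omega_idem.
Qed.

End Powers.

Section PowerMorphisms.
Variables (T1 T2 : finType) (mul1 : T1 -> T1 -> T1) (mul2 : T2 -> T2 -> T2).
Hypotheses (mulA1 : associative mul1) (mulA2 : associative mul2).
Variables (M1 M2 : nat) (h : T1 -> T2).
Hypotheses (card1 : #|T1| <= M1) (card2 : #|T2| <= M2).
Hypothesis hM : {morph h : x y / mul1 x y >-> mul2 x y}.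

Lemma spow_morph s k : h (spow mul1 s k) = spow mul2 (h s) k.
Proof. by elim: k => //= k <-; rewrite hM. Qed.

Lemma idem_morph x : idem mul1 x -> idem mul2 (h x).
Proof. by rewrite /idem -hM => ->. Qed.

Lemma omega_morph s : h (omega mul1 M1 s) = omega mul2 M2 (h s).
Proof.
rewrite /omega spow_morph; apply: omega_uniq => //.
by rewrite -spow_morph; apply/idem_morph/omega_idem.
Qed.

Lemma omega_inv_morph s : h (omega_inv mul1 M1 s) = omega_inv mul2 M2 (h s).
Proof.
apply: (is_omega_inv_uniq mulA2); last exact: omega_inv_is_omega_inv.
have [k [-> i m]] := omega_inv_is_omega_inv mulA1 s card1.
by exists k; rewrite -!spow_morph -hM m; split=> //; apply: idem_morph.
Qed.

End PowerMorphisms.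

Section MaximalSubgroup.
Variables (T : finType) (mul : T -> T -> T).
Hypothesis mulA : associative mul.
Variable M : nat.
Hypothesis cardT : #|T| <= M.
Variable E : T.
Hypothesis idemE : idem mul E.
Local Notation omega := (omega mul M).
Local Notation omega_inv := (omega_inv mul M).

Definition in_maxgroup (s : T) : bool := [&& mul E s == s, mul s E == s & omega s == E].

Lemma in_maxgroupP s : reflect [/\ mul E s = s, mul s E = s & omega s = E] (in_maxgroup s).
Proof. by apply: (iffP and3P) => -[/eqP-> /eqP-> /eqP->]. Qed.

Lemma omega_of_right_inverse g y : mul E g = g -> mul g E = g -> mul g y = E -> omega g = E.
Proof.
move=> Eg gE gy.
have spow_inv k : mul (spow mul g k) (spow mul y k) = E.
  elim: k => // k IH; rewrite -(spowSl mulA y k) [spow mul g k.+1]/=.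
  by rewrite -mulA (mulA g y) gy mulA spow_fixr.
have omega_gE : mul (omega g) E = omega g by apply: (spow_fixr mulA).
have idem_g : idem mul (omega g) := omega_idem mulA cardT g.
rewrite -omega_gE -{1}(spow_inv M`!.-1) mulA -/(omega g) idem_g.
exact: spow_inv.
Qed.

Lemma in_maxgroup_mulV s : in_maxgroup s -> mul s (omega_inv s) = E.
Proof. by case/in_maxgroupP => _ _ <-; apply: mul_omega_inv. Qed.

Lemma in_maxgroup_inv s : in_maxgroup s -> in_maxgroup (omega_inv s).
Proof.
case/in_maxgroupP => Es sE omega_s.
have Ei : mul E (omega_inv s) = omega_inv s by apply: (spow_fixl mulA).
have iE : mul (omega_inv s) E = omega_inv s by apply: (spow_fixr mulA).
apply/in_maxgroupP; split=> //.
by apply: (omega_of_right_inverse (y := s)) => //; rewrite omega_inv_mul.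
Qed.

Lemma in_maxgroup_mul s t : in_maxgroup s -> in_maxgroup t -> in_maxgroup (mul s t).
Proof.
move=> hs ht; have [Es sE _] := in_maxgroupP _ hs; have [Et tE _] := in_maxgroupP _ ht.
have Est : mul E (mul s t) = mul s t by rewrite mulA Es.
have stE : mul (mul s t) E = mul s t by rewrite -mulA tE.
apply/in_maxgroupP; split=> //.
apply: (omega_of_right_inverse (y := mul (omega_inv t) (omega_inv s))) => //.
by rewrite -mulA (mulA t) in_maxgroup_mulV // mulA sE in_maxgroup_mulV.
Qed.

Lemma in_maxgroup_sandwich s : omega (mul (mul E s) E) = E -> in_maxgroup (mul (mul E s) E).
Proof.
move=> h; apply/in_maxgroupP; split=> //; first by rewrite !mulA idemE.
by rewrite -!mulA idemE.
Qed.

Lemma in_maxgroup_cancel t P : in_maxgroup t -> in_maxgroup P ->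
  mul (mul t P) t = t -> mul t P = E.
Proof.
move=> ht /in_maxgroupP [_ PE _] /(congr1 (mul^~ (omega_inv t))).
by rewrite -mulA in_maxgroup_mulV // -mulA PE.
Qed.

Lemma in_maxgroup_right_inverse_uniq t t' P : in_maxgroup t -> in_maxgroup t' ->
  in_maxgroup P -> mul t P = E -> mul t' P = E -> t = t'.
Proof.
move=> /in_maxgroupP [_ tE _] /in_maxgroupP [_ t'E _] hP tP t'P.
by rewrite -tE -t'E -(in_maxgroup_mulV hP) !mulA tP t'P.
Qed.

End MaximalSubgroup.

Section DescendingIdempotents.
Variables (T : finType) (mul : T -> T -> T).
Hypothesis mulA : associative mul.
Variable M : nat.
Hypothesis cardT : #|T| <= M.
Local Notation omega := (omega mul M).
Local Notation idem := (idem mul).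

Definition idem_le x y := mul y x = x /\ mul x y = x.

Lemma idem_le_refl x : idem x -> idem_le x x.
Proof. by []. Qed.

Lemma idem_le_trans x y z : idem_le x y -> idem_le y z -> idem_le x z.
Proof. by move=> [yx xy] [zy yz]; split; [rewrite -yx mulA zy | rewrite -xy -mulA yz]. Qed.

Lemma idem_le_anti x y : idem_le x y -> idem_le y x -> x = y.
Proof. by move=> [yx _] [_ xy]; rewrite -yx xy. Qed.

Definition shrink r s := omega (mul (mul r s) r).

Lemma shrink_le r s : idem r -> idem (shrink r s) /\ idem_le (shrink r s) r.
Proof.
move=> idem_r; split; first exact: omega_idem.
split; first by apply: (spow_fixl mulA); rewrite !mulA idem_r.
by apply: (spow_fixr mulA); rewrite -mulA idem_r.
Qed.

Section Chain.
Variable l : seq T.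

Definition shrink_all r := foldl shrink r l.

Lemma shrink_all_le r : idem r ->
  [/\ idem (shrink_all r), idem_le (shrink_all r) r &
      shrink_all r = r -> forall s, s \in l -> shrink r s = r].
Proof.
rewrite /shrink_all; elim: l r => [|s l' IH] r idem_r /=; first by split.
have [idem_rs rs_le] := shrink_le s idem_r.
have [idem_l l_le l_fix] := IH _ idem_rs.
split=> //; first exact: idem_le_trans l_le rs_le.
move=> fixed t; have rs_r : shrink r s = r.
  by apply: idem_le_anti => //; rewrite -{1}fixed.
rewrite inE => /predU1P [-> //|tl].
by rewrite rs_r in fixed l_fix; apply: l_fix.
Qed.

Lemma shrink_all_id r : idem r -> (forall s, s \in l -> shrink r s = r) -> shrink_all r = r.
Proof.
rewrite /shrink_all; elim: l r => [|s l' IH] //= r idem_r fixed.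
by rewrite fixed ?mem_head // IH // => t tl; apply: fixed; rewrite inE tl orbT.
Qed.

Variable r0 : T.
Hypothesis idem_r0 : idem r0.

Definition chain j := iter j shrink_all r0.

Lemma chain_idem j : idem (chain j).
Proof. by elim: j => //= j IH; case: (shrink_all_le IH). Qed.

Lemma chain_le i k : i <= k -> idem_le (chain k) (chain i).
Proof.
move=> /subnK <-; elim: (k - i) => [|d IH]; first exact/idem_le_refl/chain_idem.
by apply: idem_le_trans IH; case: (shrink_all_le (chain_idem (d + i))).
Qed.

Lemma chain_stable : exists2 j, j <= #|T| & chain j.+1 = chain j.
Proof.
have [i [k [ik kT eq_ik]]] := pigeonhole_nat chain.
exists i; first lia.
apply: idem_le_anti; first exact: chain_le.
by rewrite {1}eq_ik; apply: chain_le.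
Qed.

Lemma chain_limit j : M < j ->
  chain j = chain M.+1 /\ forall s, s \in l -> shrink (chain M.+1) s = chain M.+1.
Proof.
have [j0 j0T stable] := chain_stable.
have fixed s : s \in l -> shrink (chain j0) s = chain j0.
  by case: (shrink_all_le (chain_idem j0)) => _ _; apply.
have const k : j0 <= k -> chain k = chain j0.
  move=> /subnK <-; elim: (k - j0) => // d IH.
  by rewrite addSn /= IH shrink_all_id //; apply: chain_idem.
by move=> Mj; rewrite !const //; lia.
Qed.

End Chain.
End DescendingIdempotents.

(** * Implicit operations *)

Local Notation "x ** y" := (om_mul x y) (at level 40, left associativity).

Lemma card_fsg (S : fsg) : #|'I_(fsg_n S)| <= fsg_n S.
Proof. by rewrite card_ord. Qed.

Lemma om_ext (A : finType) (u v : Om A) : (forall S a, ev u (S := S) a = ev v a) -> u = v.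
Proof.
case: u v => [f fn] [g gn] /= fg.
have {}fg : f = g.
  by apply: functional_extensionality_dep => S; apply: functional_extensionality; apply: fg.
by subst g; congr exist; apply: proof_irrelevance.
Qed.

Lemma om_mulA (A : finType) : associative (@om_mul A).
Proof. by move=> x y z; apply: om_ext => S a; rewrite /ev /= fsg_assoc. Qed.

Lemma natural_pointwise (A : finType) (F : forall S : fsg, 'I_(fsg_n S) -> 'I_(fsg_n S))
    (u : Om A) :
  (forall S1 S2 (h : 'I_(fsg_n S1) -> 'I_(fsg_n S2)),
     shom h -> forall x, h (F S1 x) = F S2 (h x)) ->
  natural (fun S a => F S (ev u a)).
Proof. by move=> hF S1 S2 h hh a; rewrite hF // /ev (proj2_sig u _ _ _ hh). Qed.

Lemma omega_shom S1 S2 (h : 'I_(fsg_n S1) -> 'I_(fsg_n S2)) : shom h ->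
  forall x, h (omega (@fsg_mul S1) (fsg_n S1) x) = omega (@fsg_mul S2) (fsg_n S2) (h x).
Proof. exact: (omega_morph (@fsg_assoc S1) (@fsg_assoc S2) (card_fsg S1) (card_fsg S2)). Qed.

Lemma omega_inv_shom S1 S2 (h : 'I_(fsg_n S1) -> 'I_(fsg_n S2)) : shom h ->
  forall x, h (omega_inv (@fsg_mul S1) (fsg_n S1) x) = omega_inv (@fsg_mul S2) (fsg_n S2) (h x).
Proof. exact: (omega_inv_morph (@fsg_assoc S1) (@fsg_assoc S2) (card_fsg S1) (card_fsg S2)). Qed.

Definition om_omega (A : finType) (u : Om A) : Om A :=
  exist _ _ (natural_pointwise u omega_shom).

Definition om_omega_inv (A : finType) (u : Om A) : Om A :=
  exist _ _ (natural_pointwise u omega_inv_shom).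

Lemma ev_mul (A : finType) (u v : Om A) S (a : A -> 'I_(fsg_n S)) :
  ev (u ** v) a = fsg_mul (ev u a) (ev v a).
Proof. by []. Qed.

Lemma ev_omega (A : finType) (u : Om A) S (a : A -> 'I_(fsg_n S)) :
  ev (om_omega u) a = omega (@fsg_mul S) (fsg_n S) (ev u a).
Proof. by []. Qed.

Lemma ev_idem (A : finType) (e : Om A) S (a : A -> 'I_(fsg_n S)) :
  e ** e = e -> idem (@fsg_mul S) (ev e a).
Proof. by rewrite /idem -ev_mul => ->. Qed.

Notation letter_omega x := (om_omega (om_var x)).

Section OmegaIdentities.
Variable A : finType.
Implicit Types u v e s : Om A.

Lemma om_omega_idem u : om_omega u ** om_omega u = om_omega u.
Proof. by apply: om_ext => S a; exact: (omega_idem (@fsg_assoc S) (card_fsg S)). Qed.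

Lemma om_omega_mulC u : om_omega u ** u = u ** om_omega u.
Proof. by apply: om_ext => S a; apply: (omega_mulC (@fsg_assoc S)). Qed.

Lemma om_mul_omega_inv u : u ** om_omega_inv u = om_omega u.
Proof. by apply: om_ext => S a; exact: (mul_omega_inv (@fsg_assoc S) (card_fsg S)). Qed.

Lemma om_omega_shift u v : om_omega (u ** v) ** u = u ** om_omega (v ** u).
Proof. by apply: om_ext => S a; apply: (omega_shift (@fsg_assoc S)). Qed.

Lemma om_omega_sq u : om_omega (u ** u) = om_omega u.
Proof. by apply: om_ext => S a; exact: (omega_sq (@fsg_assoc S) (card_fsg S)). Qed.

Lemma om_omega_inv_sandwich e s : e ** e = e ->
  s ** e ** om_omega_inv (e ** s ** e) ** (e ** s) = s ** om_omega (e ** s).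
Proof.
move=> idem_e; apply: om_ext => S a.
exact/(omega_inv_sandwich (@fsg_assoc S) (card_fsg S))/ev_idem.
Qed.

End OmegaIdentities.

Section FinTypeSemigroup.
Variables (T : finType) (mul : T -> T -> T).
Hypothesis mulA : associative mul.

Definition fsg_of_mul (i j : 'I_#|T|) : 'I_#|T| := enum_rank (mul (enum_val i) (enum_val j)).

Lemma fsg_of_mulA : associative fsg_of_mul.
Proof. by move=> i j k; rewrite /fsg_of_mul !enum_rankK mulA. Qed.

Definition fsg_of : fsg := FSg fsg_of_mulA.

Lemma enum_rank_morph : {morph enum_rank : x y / mul x y >-> @fsg_mul fsg_of x y}.
Proof. by move=> x y; rewrite /= /fsg_of_mul !enum_rankK. Qed.

Lemma enum_val_morph : {morph enum_val : i j / @fsg_mul fsg_of i j >-> mul i j}.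
Proof. by move=> i j; rewrite /= /fsg_of_mul enum_rankK. Qed.

Variable A : finType.

Definition evalT (w : Om A) (a : A -> T) : T :=
  enum_val (ev w (S := fsg_of) (fun b => enum_rank (a b))).

Definition coord_of (a : A -> T) : coord A := existT _ fsg_of (fun b => enum_rank (a b)).

Lemma evalT_mul u v a : evalT (u ** v) a = mul (evalT u a) (evalT v a).
Proof. exact: enum_val_morph. Qed.

Lemma evalT_var b a : evalT (om_var b) a = a b.
Proof. exact: enum_rankK. Qed.

Lemma evalT_homT a : is_homT mul (evalT^~ a).
Proof. by move=> u v; apply: evalT_mul. Qed.

Lemma evalT_contT a : is_contT (evalT^~ a).
Proof. by move=> u; exists [:: coord_of a] => u' [eq_u _]; congr enum_val; exact: eq_u. Qed.

End FinTypeSemigroup.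

Lemma evalT_morph (A T1 T2 : finType) (mul1 : T1 -> T1 -> T1) (mul2 : T2 -> T2 -> T2)
    (mulA1 : associative mul1) (mulA2 : associative mul2) (h : T1 -> T2) :
  {morph h : x y / mul1 x y >-> mul2 x y} ->
  forall (w : Om A) a, h (evalT mulA1 w a) = evalT mulA2 w (h \o a).
Proof.
move=> hM w a.
pose h' (i : 'I_#|T1|) : 'I_#|T2| := enum_rank (h (enum_val i)).
have h'M : shom (S1 := fsg_of mulA1) (S2 := fsg_of mulA2) h'.
  by move=> x y; rewrite /h' /= /fsg_of_mul !enum_rankK hM.
rewrite /evalT; have -> : (fun b => enum_rank ((h \o a) b)) = h' \o (fun b => enum_rank (a b)).
  by apply: functional_extensionality => b; rewrite /h' /= enum_rankK.
by rewrite /ev -(proj2_sig w _ _ _ h'M) /h' enum_rankK.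
Qed.

Lemma ev_evalT (A : finType) (S : fsg) (w : Om A) (a : A -> 'I_(fsg_n S)) :
  ev w a = evalT (@fsg_assoc S) w a.
Proof.
have rankM : shom (S1 := S) (S2 := fsg_of (@fsg_assoc S)) enum_rank := enum_rank_morph _.
by rewrite /evalT /ev -(proj2_sig w _ _ _ rankM) enum_rankK.
Qed.

Section Words.
Variable A : finType.

Definition word (x : A) (s : seq A) : Om A := foldl (fun w y => w ** om_var y) (om_var x) s.

Lemma word_nil x : word x [::] = om_var x.
Proof. by []. Qed.

Lemma word_rcons x s y : word x (rcons s y) = word x s ** om_var y.
Proof. by rewrite /word foldl_rcons. Qed.

Lemma word_cat x s y t : word x (s ++ y :: t) = word x s ** word y t.
Proof.
elim/last_ind: t => [|t z IH]; first by rewrite cats1 word_rcons.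
by rewrite -rcons_cons -rcons_cat !word_rcons IH om_mulA.
Qed.

Lemma agree_refl (L : seq (coord A)) u : agree L u u.
Proof. by elim: L => //= c L ->. Qed.

Lemma agree_cat (L1 L2 : seq (coord A)) u v :
  agree (L1 ++ L2) u v <-> agree L1 u v /\ agree L2 u v.
Proof. by elim: L1 => /= [|c L IH]; [tauto | rewrite IH; tauto]. Qed.

Lemma agree_mul (L : seq (coord A)) u u' v v' :
  agree L u u' -> agree L v v' -> agree L (u ** v) (u' ** v').
Proof.
elim: L => //= -[S a] L IH [eq_u /IH {}IH] [eq_v /IH {}IH]; split=> //.
by rewrite /evc /ev /= -!/(ev _ _); congr fsg_mul; [exact: eq_u | exact: eq_v].
Qed.

(* The values of words form a subsemigroup containing the generators. *)
Lemma ev_word (S : fsg) (a : A -> 'I_(fsg_n S)) (w : Om A) :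
  exists x s, ev (word x s) a = ev w a.
Proof.
pose P p := exists x s, ev (word x s) a = p.
pose inW p : bool := if excluded_middle_informative (P p) then true else false.
have inWP p : reflect (P p) (inW p).
  by rewrite /inW; case: excluded_middle_informative => h; constructor.
pose W := {p : 'I_(fsg_n S) | inW p}.
have mul_closed (p q : W) : inW (fsg_mul (val p) (val q)).
  case: p q => [p Wp] [q Wq] /=.
  have [x [s eq_p]] := inWP p Wp; have [y [t eq_q]] := inWP q Wq.
  by apply/inWP; exists x, (s ++ y :: t); rewrite word_cat -eq_p -eq_q.
pose mulW (p q : W) : W := exist (fun p => inW p) _ (mul_closed p q).
have mulWA : associative mulW by move=> p q r; apply: val_inj; rewrite /= fsg_assoc.
have gen b : inW (a b) by apply/inWP; exists b, [::].
have := evalT_morph mulWA (@fsg_assoc S) (h := val) (fun _ _ => erefl) w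
  (fun b => exist (fun p => inW p) _ (gen b)).
by rewrite -ev_evalT => <-; apply/inWP; apply: valP.
Qed.

(* Take the coordinate in the product of the semigroups of [L]. *)
Lemma coord_merge (L : seq (coord A)) :
  exists c : coord A, forall u v, evc u c = evc v c -> agree L u v.
Proof.
elim: L => [|[S0 a0] L [[S1 a1] IH]].
  by exists (coord_of (mul := fun _ _ => tt) (fun _ _ _ => erefl) (fun _ => tt)).
pose pm (x y : 'I_(fsg_n S0) * 'I_(fsg_n S1)) := (fsg_mul x.1 y.1, fsg_mul x.2 y.2).
have pmA : associative pm by move=> x y z; rewrite /pm !fsg_assoc.
pose a b := (a0 b, a1 b).
exists (coord_of pmA a) => u v eq_uv.
have {}eq_uv : evalT pmA u a = evalT pmA v a by rewrite /evalT; congr enum_val.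
have fst_ev w : evc w (existT _ S0 a0) = (evalT pmA w a).1.
  by rewrite /evc /= ev_evalT (evalT_morph pmA (@fsg_assoc S0) (h := fst)).
have snd_ev w : evc w (existT _ S1 a1) = (evalT pmA w a).2.
  by rewrite /evc /= ev_evalT (evalT_morph pmA (@fsg_assoc S1) (h := snd)).
by split; [rewrite !fst_ev eq_uv | apply: IH; rewrite !snd_ev eq_uv].
Qed.

Lemma words_dense (L : seq (coord A)) (w : Om A) : exists x s, agree L (word x s) w.
Proof.
have [[S a] merged] := coord_merge L.
by have [x [s eq_w]] := ev_word a w; exists x, s; apply: merged.
Qed.

End Words.

Section Substitution.
Variables (B A : finType) (sg : B -> Om A).

Lemma om_subst_natural (w : Om B) :
  natural (fun S (a : A -> 'I_(fsg_n S)) => ev w (fun b => ev (sg b) a)).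
Proof.
move=> S1 S2 h hh a; rewrite /ev (proj2_sig w _ _ _ hh); congr (sval w _ _).
by apply: functional_extensionality => b /=; rewrite (proj2_sig (sg b) _ _ _ hh).
Qed.

Definition om_subst (w : Om B) : Om A := exist _ _ (om_subst_natural w).

Lemma om_subst_mul u v : om_subst (u ** v) = om_subst u ** om_subst v.
Proof. exact: om_ext. Qed.

Lemma om_subst_omega w : om_subst (om_omega w) = om_omega (om_subst w).
Proof. exact: om_ext. Qed.

Lemma om_subst_var b : om_subst (om_var b) = sg b.
Proof. exact: om_ext. Qed.

Lemma om_subst_cont : is_cont om_subst.
Proof. by move=> [S a] u; exists [:: existT _ S (fun b => ev (sg b) a)] => u' []. Qed.

End Substitution.

Section Letters.
Variable A : finType.

Definition first_letter (w : Om A) : A := evalT (mul := fun x _ => x) (fun _ _ _ => erefl) w id.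
Definition last_letter (w : Om A) : A := evalT (mul := fun _ y => y) (fun _ _ _ => erefl) w id.

Lemma first_letter_var x : first_letter (om_var x) = x.
Proof. exact: evalT_var. Qed.

Lemma first_letter_mul u v : first_letter (u ** v) = first_letter u.
Proof. exact: evalT_mul. Qed.

Lemma last_letter_var x : last_letter (om_var x) = x.
Proof. exact: evalT_var. Qed.

Lemma last_letter_mul u v : last_letter (u ** v) = last_letter v.
Proof. exact: evalT_mul. Qed.

Lemma first_letter_word x s : first_letter (word x s) = x.
Proof.
elim/last_ind: s => [|s y IH]; first exact: first_letter_var.
by rewrite word_rcons first_letter_mul IH.
Qed.

Lemma last_letter_word x s : last_letter (word x s) = last x s.
Proof.
case/lastP: s => [|s y]; first exact: last_letter_var.
by rewrite word_rcons last_letter_mul last_letter_var last_rcons.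
Qed.

End Letters.

(** * Provability *)

Section Provability.
Variables (Sg : pid -> Prop) (A : finType).
Local Notation "u ≈ v" := (@provable Sg A u v) (at level 70).

(* [provable_ind] has no induction hypothesis for the premises of [pr_clos],
   which sit under an existential. *)
Lemma provable_ind' (P : Om A -> Om A -> Prop) :
  (forall u v, Sigma0 Sg u v -> P u v) ->
  (forall u v w, u ≈ v -> P u v -> v ≈ w -> P v w -> P u w) ->
  (forall u v, (forall L, exists u' v', [/\ u' ≈ v', P u' v', agree L u' u & agree L v' v]) ->
     P u v) ->
  forall u v, u ≈ v -> P u v.
Proof.
move=> base trans clos; fix IH 3 => u v [{}u {}v h | {}u v' {}v p1 p2 | {}u {}v h].
- exact: base.
- exact: trans (IH _ _ p1) p2 (IH _ _ p2).
- apply: clos => L; case: (h L) => u' [v' [p a1 a2]].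
  by exists u', v'; split=> //; apply: IH.
Qed.

Lemma provable_sym u v : u ≈ v -> v ≈ u.
Proof.
move: u v; apply: provable_ind' => [u v [q [phi [t [Sq hom cont eq_uv]]]] | u v w _ vu _ wv |
  u v h].
- apply: pr_base; exists q, phi, t; split=> //.
  by case: eq_uv => -[-> ->]; [right | left].
- exact: pr_trans wv vu.
- apply: pr_clos => L; have [u' [v' [_ p a1 a2]]] := h L.
  by exists v', u'.
Qed.

Lemma provable_context (C : Om A -> Om A) (Ct : sterm A -> sterm A) :
  (forall t z, st_eval (Ct t) z = C (st_eval t z)) ->
  (forall L u u', agree L u u' -> agree L (C u) (C u')) ->
  forall u v, u ≈ v -> C u ≈ C v.
Proof.
move=> evalC contC.
apply: provable_ind' => [u v [q [phi [t [Sq hom cont eq_uv]]]] | u v w _ uv _ vw | u v h].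
- apply: pr_base; exists q, phi, (Ct t); rewrite !evalC; split=> //.
  by case: eq_uv => -[-> ->]; [left | right].
- exact: pr_trans uv vw.
- apply: pr_clos => L; have [u' [v' [_ p a1 a2]]] := h L.
  by exists (C u'), (C v'); split; [| apply: contC ..].
Qed.

Lemma provable_mul u v u' v' : u ≈ v -> u' ≈ v' -> u ** u' ≈ v ** v'.
Proof.
move=> uv u'v'; apply: (pr_trans (v := v ** u')).
  apply: (provable_context (C := fun z => z ** u') (Ct := fun t => Mu t (Lf u'))) => //.
  by move=> L z z' agz; apply: agree_mul agz (agree_refl _ _).
apply: (provable_context (C := om_mul v) (Ct := Mu (Lf v))) => //.
by move=> L z z'; apply: agree_mul (agree_refl _ _).
Qed.

Definition unif_cont (F : Om A -> Om A) :=
  forall c : coord A, exists L, forall w w', agree L w w' -> evc (F w) c = evc (F w') c.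

Lemma unif_cont_id : unif_cont id.
Proof. by move=> c; exists [:: c] => w w' []. Qed.

Lemma unif_cont_const w0 : unif_cont (fun _ => w0).
Proof. by move=> c; exists [::]. Qed.

Lemma unif_cont_mul F G : unif_cont F -> unif_cont G -> unif_cont (fun w => F w ** G w).
Proof.
move=> contF contG c; have [L1 agF] := contF c; have [L2 agG] := contG c.
exists (L1 ++ L2) => w w' /agree_cat [a1 a2].
by rewrite /evc /ev /= -!/(ev _ _) -!/(evc _ c) (agF _ _ a1) (agG _ _ a2).
Qed.

Lemma unif_cont_evalT (T : finType) (mul : T -> T -> T) (mulA : associative mul)
    (a : A -> T) (g : T -> Om A) :
  unif_cont (fun w => g (evalT mulA w a)).
Proof.
move=> c; exists [:: coord_of mulA a] => w w' [eq_w _].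
by rewrite /evalT; congr (evc (g (enum_val _)) c); exact: eq_w.
Qed.

Lemma unif_cont_first_letter (g : A -> Om A) : unif_cont (fun w => g (first_letter w)).
Proof. exact: unif_cont_evalT. Qed.

Lemma unif_cont_last_letter (g : A -> Om A) : unif_cont (fun w => g (last_letter w)).
Proof. exact: unif_cont_evalT. Qed.

Lemma unif_cont_agree F (L : seq (coord A)) : unif_cont F ->
  exists L', forall w w', agree L' w w' -> agree L (F w) (F w').
Proof.
move=> contF; elim: L => [|c L [L' IH]]; first by exists [::].
have [Lc agc] := contF c.
by exists (Lc ++ L') => w w' /agree_cat [a1 a2]; split; [apply: agc | apply: IH].
Qed.

Lemma provable_of_words F G : unif_cont F -> unif_cont G ->
  (forall x s, F (word x s) ≈ G (word x s)) -> forall w, F w ≈ G w.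
Proof.
move=> contF contG on_words w; apply: pr_clos => L.
have [L1 agF] := unif_cont_agree L contF; have [L2 agG] := unif_cont_agree L contG.
have [x [s /agree_cat [a1 a2]]] := words_dense (L1 ++ L2) w.
by exists (F (word x s)), (G (word x s)); split; [| apply: agF | apply: agG].
Qed.

End Provability.

Arguments unif_cont_id {A}.

#[export] Instance om_mul_provable_proper Sg A :
  Proper (@provable Sg A ==> @provable Sg A ==> @provable Sg A) (@om_mul A).
Proof. by move=> u v uv u' v' u'v'; apply: provable_mul. Qed.

(** * A kernel idempotent *)

Section KernelIdempotent.
Variables (A I : finType) (gen : I -> Om A) (r0 : Om A).
Hypothesis idem_r0 : r0 ** r0 = r0.

Definition shrink_gens (r : Om A) := foldl (fun r i => om_omega (r ** gen i ** r)) r (enum I).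

Definition kernel_approx j := iter j shrink_gens r0.

Section Evaluation.
Variables (S : fsg) (a : A -> 'I_(fsg_n S)).
Local Notation chain_at :=
  (chain (@fsg_mul S) (fsg_n S) [seq ev (gen i) a | i <- enum I] (ev r0 a)).

Lemma ev_kernel_approx j : ev (kernel_approx j) a = chain_at j.
Proof.
elim: j => //= j <-; rewrite /shrink_gens /shrink_all.
by elim: (enum I) (kernel_approx j) => //= i l IH r; apply: IH.
Qed.

Lemma kernel_approx_limit j : fsg_n S < j ->
  ev (kernel_approx j) a = ev (kernel_approx (fsg_n S).+1) a /\
  forall i, shrink (@fsg_mul S) (fsg_n S) (ev (kernel_approx (fsg_n S).+1) a) (ev (gen i) a)
            = ev (kernel_approx (fsg_n S).+1) a.
Proof.
move=> Sj; have [chain_j fixed] := chain_limit (@fsg_assoc S) (card_fsg S)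
  [seq ev (gen i) a | i <- enum I] (ev_idem a idem_r0) Sj.
rewrite !ev_kernel_approx; split=> [|i]; first exact: chain_j.
by apply: fixed; apply: map_f; rewrite mem_enum.
Qed.

End Evaluation.

(* In [S] the approximations are constant from round [fsg_n S] on. *)
Lemma kernel_natural : natural (fun S a => ev (kernel_approx (fsg_n S).+1) a).
Proof.
move=> S1 S2 h hh a /=.
pose j := (maxn (fsg_n S1) (fsg_n S2)).+1.
have [lim1 _] := kernel_approx_limit a (j := j) ltac:(lia).
have [lim2 _] := kernel_approx_limit (h \o a) (j := j) ltac:(lia).
by rewrite -lim1 /ev (proj2_sig (kernel_approx j) _ _ _ hh) -/(ev _ _) lim2.
Qed.

Definition kernel_idem : Om A := exist _ _ kernel_natural.

Lemma ev_kernel_idem S (a : A -> 'I_(fsg_n S)) :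
  ev kernel_idem a = ev (kernel_approx (fsg_n S).+1) a.
Proof. by []. Qed.

Lemma kernel_idem_idem : kernel_idem ** kernel_idem = kernel_idem.
Proof.
apply: om_ext => S a; rewrite ev_mul ev_kernel_idem ev_kernel_approx.
exact/(chain_idem (@fsg_assoc S) (card_fsg S))/ev_idem.
Qed.

Lemma kernel_idem_absorbs S (a : A -> 'I_(fsg_n S)) i :
  omega (@fsg_mul S) (fsg_n S)
    (fsg_mul (fsg_mul (ev kernel_idem a) (ev (gen i) a)) (ev kernel_idem a)) = ev kernel_idem a.
Proof. by have [_ fixed] := kernel_approx_limit a (ltnSn (fsg_n S)); apply: fixed. Qed.

End KernelIdempotent.

(** * Evaluation in a Rees matrix semigroup *)

Section ReesEvaluation.
Variables (A : finType) (e : Om A).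

Definition sandwich (y x : A) : Om A :=
  om_omega_inv (e ** letter_omega y ** e) ** (e ** (letter_omega y ** letter_omega x) ** e)
  ** om_omega_inv (e ** letter_omega x ** e).

Section Triples.
Variables (S : fsg) (a : A -> 'I_(fsg_n S)).

Definition rees_mul (p q : A * 'I_(fsg_n S) * A) : A * 'I_(fsg_n S) * A :=
  (p.1.1, fsg_mul (fsg_mul p.1.2 (ev (sandwich p.2 q.1.1) a)) q.1.2, q.2).

Lemma rees_mulA : associative rees_mul.
Proof. by move=> [[x1 s1] y1] [[x2 s2] y2] [[x3 s3] y3]; rewrite /rees_mul /= !fsg_assoc. Qed.

Definition rees_gen (x : A) : A * 'I_(fsg_n S) * A := (x, ev (e ** om_var x ** e) a, x).

Definition rees_eval (w : Om A) := evalT rees_mulA w rees_gen.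

Lemma rees_eval_first w : (rees_eval w).1.1 = first_letter w.
Proof. exact: (evalT_morph _ _ (h := fun p => p.1.1)). Qed.

Lemma rees_eval_last w : (rees_eval w).2 = last_letter w.
Proof. exact: (evalT_morph _ _ (h := fun p => p.2)). Qed.

End Triples.

Lemma rees_core_natural (w : Om A) :
  natural (fun S (a : A -> 'I_(fsg_n S)) => (rees_eval a w).1.2).
Proof.
move=> S1 S2 h hh a /=.
have nat_h (u : Om A) b : h (ev u b) = ev u (h \o b) by rewrite /ev (proj2_sig u _ _ _ hh).
pose H (p : A * 'I_(fsg_n S1) * A) : A * 'I_(fsg_n S2) * A := (p.1.1, h p.1.2, p.2).
have HM : {morph H : p q / rees_mul a p q >-> rees_mul (h \o a) p q}.
  by move=> [[x1 s1] y1] [[x2 s2] y2]; rewrite /H /rees_mul; cbn [fst snd]; rewrite 2!hh nat_h.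
have := evalT_morph (rees_mulA a) (rees_mulA (h \o a)) HM w (rees_gen a).
have -> : H \o rees_gen a = rees_gen (h \o a).
  apply: functional_extensionality => b.
  by rewrite /comp /H /rees_gen; cbn [fst snd]; rewrite nat_h.
by rewrite /rees_eval => <-.
Qed.

(* In a completely simple semigroup, [rees_core e w] is [e w e]. *)
Definition rees_core (w : Om A) : Om A := exist _ _ (rees_core_natural w).

Lemma rees_core_mul u v :
  rees_core (u ** v) = rees_core u ** sandwich (last_letter u) (first_letter v) ** rees_core v.
Proof.
apply: om_ext => S a; rewrite !ev_mul /ev /= -!/(ev _ _) /rees_eval evalT_mul /=.
by rewrite -/(rees_eval _ _) rees_eval_last -/(rees_eval _ _) rees_eval_first.
Qed.

Lemma rees_core_var x : rees_core (om_var x) = e ** om_var x ** e.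
Proof. by apply: om_ext => S a; rewrite /ev /= /rees_eval evalT_var. Qed.

Lemma unif_cont_rees_core : unif_cont rees_core.
Proof.
move=> [S a]; exists [:: coord_of (rees_mulA a) (rees_gen a)] => w w' [eq_w _].
by rewrite /evc /ev /= /rees_eval /evalT; congr (enum_val _).1.2; exact: eq_w.
Qed.

End ReesEvaluation.

(** * Consequences of [x^ω x = x] and [(x y)^ω x = x] *)

Section Derivations.
Variables (Sg : pid -> Prop) (A : finType).
Local Notation "u ≈ v" := (@provable Sg A u v) (at level 70).
Hypothesis omega_mul_id : forall a : Om A, om_omega a ** a ≈ a.
Hypothesis omega_shift_id : forall a b : Om A, om_omega (a ** b) ** a ≈ a.

Lemma provable_refl u : u ≈ u.
Proof. exact: pr_trans (provable_sym (omega_mul_id u)) (omega_mul_id u). Qed.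

#[local] Hint Resolve provable_refl : core.

Lemma provable_equivalence : Equivalence (@provable Sg A).
Proof. split; [exact: provable_refl | exact: provable_sym | exact: pr_trans]. Qed.

#[local] Existing Instance provable_equivalence.

Lemma mul_omega_id u : u ** om_omega u ≈ u.
Proof. by rewrite -om_omega_mulC. Qed.

Lemma mul_omega_shift_id s e : s ** om_omega (e ** s) ≈ s.
Proof. by rewrite -om_omega_shift. Qed.

Lemma first_letter_absorb w : w ≈ letter_omega (first_letter w) ** w.
Proof.
apply: (provable_of_words (F := id) (G := fun w => letter_omega (first_letter w) ** w)).
- exact: unif_cont_id.
- exact: unif_cont_mul (unif_cont_first_letter (fun x => letter_omega x)) unif_cont_id.
move=> x s; rewrite first_letter_word /=.
elim/last_ind: s => [|s y IH]; first by rewrite word_nil omega_mul_id.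
by rewrite word_rcons om_mulA -IH.
Qed.

Lemma last_letter_absorb w : w ≈ w ** letter_omega (last_letter w).
Proof.
apply: (provable_of_words (F := id) (G := fun w => w ** letter_omega (last_letter w))).
- exact: unif_cont_id.
- exact: unif_cont_mul unif_cont_id (unif_cont_last_letter (fun x => letter_omega x)).
move=> x s; rewrite last_letter_word /=.
case/lastP: s => [|s y]; first by rewrite word_nil mul_omega_id.
by rewrite last_rcons word_rcons -om_mulA mul_omega_id.
Qed.

Section Idempotent.
Variable e : Om A.
Hypothesis idem_e : e ** e = e.

Lemma split_at_idem s : s ≈ s ** e ** om_omega_inv (e ** s ** e) ** (e ** s).
Proof. by rewrite om_omega_inv_sandwich // mul_omega_shift_id. Qed.

Lemma split_at_idem_r f w : w ** f ≈ w -> w ≈ w ** e ** om_omega_inv (e ** f ** e) ** (e ** f).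
Proof. by move=> wf; rewrite -{1}wf {1}(split_at_idem f) !om_mulA wf. Qed.

Lemma split_at_idem_l f w : f ** w ≈ w -> w ≈ f ** e ** om_omega_inv (e ** f ** e) ** (e ** w).
Proof. by move=> fw; rewrite -{1}fw {1}(split_at_idem f) !om_mulA -(om_mulA _ f w) fw. Qed.

Lemma rees_core_step W x : e ** (W ** om_var x) ** e ≈
  (e ** W ** e) ** sandwich e (last_letter W) x ** (e ** om_var x ** e).
Proof.
have W_split := split_at_idem_r (provable_sym (last_letter_absorb W)).
have x_split := split_at_idem_l (omega_mul_id (om_var x)).
by rewrite {1}W_split {1}x_split /sandwich !om_mulA.
Qed.

Lemma rees_core_provable w : rees_core e w ≈ e ** w ** e.
Proof.
apply: (provable_of_words (G := fun w => e ** w ** e)) => [||x s].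
- exact: unif_cont_rees_core.
- exact: unif_cont_mul (unif_cont_mul (unif_cont_const _) unif_cont_id) (unif_cont_const _).
elim/last_ind: s => [|s y IH]; first by rewrite word_nil rees_core_var.
by rewrite word_rcons rees_core_mul first_letter_var rees_core_var IH rees_core_step.
Qed.

Definition left_factor x := letter_omega x ** e ** om_omega_inv (e ** letter_omega x ** e).
Definition right_factor y := om_omega_inv (e ** letter_omega y ** e) ** (e ** letter_omega y).

Lemma normal_form w :
  w ≈ left_factor (first_letter w) ** (e ** w ** e) ** right_factor (last_letter w).
Proof.
set X := letter_omega (first_letter w); set Y := letter_omega (last_letter w).
have Xw : X ** w ≈ w by rewrite -first_letter_absorb.
have wY : w ** Y ≈ w by rewrite -last_letter_absorb.
set v := e ** w ** e.
have we : w ** e ≈ left_factor (first_letter w) ** v.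
  by rewrite -{1}Xw {1}(split_at_idem X) /left_factor !om_mulA -(om_mulA _ X w) Xw.
have ew : e ** w ≈ v ** right_factor (last_letter w).
  by rewrite -{1}wY {1}(split_at_idem Y) /right_factor !om_mulA -(om_mulA e w Y) wY.
have vIv : v ** om_omega_inv v ** v ≈ v by rewrite om_mul_omega_inv omega_mul_id.
transitivity (w ** e ** om_omega_inv v ** (e ** w)); first exact: split_at_idem.
set L := left_factor _; set R := right_factor _.
transitivity (L ** v ** om_omega_inv v ** (v ** R)).
  by apply: provable_mul => //; apply: provable_mul.
have -> : L ** v ** om_omega_inv v ** (v ** R) = L ** (v ** om_omega_inv v ** v) ** R.
  by rewrite !om_mulA.
by rewrite vIv.
Qed.

Lemma provable_of_rees_core u v : first_letter u = first_letter v ->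
  last_letter u = last_letter v -> rees_core e u = rees_core e v -> u ≈ v.
Proof.
move=> first_uv last_uv core_uv.
transitivity (left_factor (first_letter u) ** rees_core e u ** right_factor (last_letter u)).
  by rewrite rees_core_provable; apply: normal_form.
by rewrite first_uv last_uv core_uv rees_core_provable -normal_form.
Qed.

End Idempotent.
End Derivations.

(** * A completely simple Rees matrix semigroup *)

Definition gens (A : finType) (i : A + A * A) : Om A :=
  match i with inl x => om_var x | inr (y, x) => letter_omega y ** letter_omega x end.

Section ReesMatrix.
Variables (A : finType) (e : Om A) (S : fsg) (a : A -> 'I_(fsg_n S)).
Local Notation mul := (@fsg_mul S).
Local Notation E := (ev e a).
Local Notation in_H := (in_maxgroup mul (fsg_n S) E).
Hypothesis idemE : idem mul E.
Hypothesis absorbs : forall i, omega mul (fsg_n S) (mul (mul E (ev (gens i) a)) E) = E.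
Let mulA := @fsg_assoc S.
Let cardS := card_fsg S.

Lemma in_maxgroup_gen x : in_H (ev (e ** om_var x ** e) a).
Proof. exact: (in_maxgroup_sandwich mulA idemE (absorbs (inl x))). Qed.

Lemma in_maxgroup_sandwich_entry y x : in_H (ev (sandwich e y x) a).
Proof.
have in_pair y' x' : in_H (mul (mul E (ev (letter_omega y' ** letter_omega x') a)) E).
  exact: (in_maxgroup_sandwich mulA idemE (absorbs (inr (y', x')))).
have in_letter z : in_H (ev (e ** letter_omega z ** e) a).
  by have := in_pair z z; rewrite ev_mul (ev_idem a (om_omega_idem _)).
have inv_letter z : in_H (ev (om_omega_inv (e ** letter_omega z ** e)) a).
  exact: (in_maxgroup_inv mulA cardS (in_letter z)).
rewrite /sandwich !ev_mul.
apply: (in_maxgroup_mul mulA cardS) (inv_letter x).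
exact: (in_maxgroup_mul mulA cardS) (inv_letter y) (in_pair y x).
Qed.

Definition HE := {s : 'I_(fsg_n S) | in_H s}.
Definition rm_elt := (A * HE * A)%type.

Definition rm_entry y x : HE := exist (fun s => in_H s) _ (in_maxgroup_sandwich_entry y x).

Lemma rm_mul_closed (p q : rm_elt) :
  in_H (mul (mul (val p.1.2) (val (rm_entry p.2 q.1.1))) (val q.1.2)).
Proof.
apply: (in_maxgroup_mul mulA cardS) (valP _).
exact: (in_maxgroup_mul mulA cardS) (valP _) (valP _).
Qed.

Definition rm_mul (p q : rm_elt) : rm_elt :=
  (p.1.1, exist (fun s => in_H s) _ (rm_mul_closed p q), q.2).

Lemma rm_mulA : associative rm_mul.
Proof.
move=> [[x1 s1] y1] [[x2 s2] y2] [[x3 s3] y3]; rewrite /rm_mul /=.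
by congr (_, _, _); apply: val_inj; rewrite /= !fsg_assoc.
Qed.

Definition rm_gen (x : A) : rm_elt := (x, exist (fun s => in_H s) _ (in_maxgroup_gen x), x).

Definition rm_embed (p : rm_elt) : A * 'I_(fsg_n S) * A := (p.1.1, val p.1.2, p.2).

Lemma rm_embed_morph : {morph rm_embed : p q / rm_mul p q >-> rees_mul e a p q}.
Proof. by []. Qed.

Local Notation rm_omega := (omega rm_mul #|{: rm_elt}|).

Lemma rm_omega_ends p : (rm_omega p).1.1 = p.1.1 /\ (rm_omega p).2 = p.2.
Proof. by rewrite /omega; elim: (_.-1) => //= k [-> _]. Qed.

Lemma rm_omega_middle p :
  mul (val (rm_omega p).1.2) (val (rm_entry p.2 p.1.1)) = E.
Proof.
have [first_p last_p] := rm_omega_ends p; rewrite -first_p -last_p.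
have /(congr1 (fun q => val q.1.2)) idem_p := omega_idem rm_mulA (leqnn _) p.
exact: (in_maxgroup_cancel mulA cardS (valP _) (valP _) idem_p).
Qed.

Lemma rm_elt_eq (p q : rm_elt) : p.1.1 = q.1.1 -> val p.1.2 = val q.1.2 -> p.2 = q.2 -> p = q.
Proof. by case: p q => [[x s] y] [[x' s'] y'] /= -> /val_inj -> ->. Qed.

Lemma rm_omega_mul q p : q.1.1 = p.1.1 -> rm_mul (rm_omega q) p = p.
Proof.
move=> first_qp; have [first_q last_q] := rm_omega_ends q.
apply: rm_elt_eq => //=; first by rewrite first_q.
have /in_maxgroupP [Ep _ _] := valP p.1.2.
by rewrite last_q -first_qp rm_omega_middle Ep.
Qed.

Lemma rm_omega_eq p q : p.1.1 = q.1.1 -> p.2 = q.2 -> rm_omega p = rm_omega q.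
Proof.
move=> first_pq last_pq.
have [first_p last_p] := rm_omega_ends p; have [first_q last_q] := rm_omega_ends q.
apply: rm_elt_eq; rewrite ?first_p ?first_q ?last_p ?last_q //.
apply: (in_maxgroup_right_inverse_uniq mulA cardS (valP _) (valP _)
  (valP (rm_entry p.2 p.1.1))).
- exact: rm_omega_middle.
- by rewrite first_pq last_pq rm_omega_middle.
Qed.

End ReesMatrix.

Definition cs_identities (T : finType) (mul : T -> T -> T) :=
  [/\ forall p, mul (omega mul #|T| p) p = p,
      forall p r, mul (omega mul #|T| (mul p r)) p = p &
      forall p r, omega mul #|T| (mul (mul p r) p) = omega mul #|T| p].

Lemma rm_cs_identities (A : finType) (e : Om A) S (a : A -> 'I_(fsg_n S)) idemE absorbs :
  cs_identities (@rm_mul A e S a idemE absorbs).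
Proof.
split=> [p | p r | p r]; first exact: rm_omega_mul.
- by apply: rm_omega_mul.
- by apply: rm_omega_eq.
Qed.

Lemma rees_eval_eq (A : finType) (e : Om A) S (a : A -> 'I_(fsg_n S)) (u v : Om A) :
  idem (@fsg_mul S) (ev e a) ->
  (forall i, omega (@fsg_mul S) (fsg_n S)
     (fsg_mul (fsg_mul (ev e a) (ev (gens i) a)) (ev e a)) = ev e a) ->
  (forall (T : finType) (mul : T -> T -> T), associative mul -> cs_identities mul ->
     holds mul u v) ->
  rees_eval e a u = rees_eval e a v.
Proof.
move=> idemE absorbs valid.
have rmA := rm_mulA idemE absorbs.
have embed w : rees_eval e a w = rm_embed (evalT rmA w (rm_gen idemE absorbs)).
  by rewrite (evalT_morph rmA (rees_mulA e a) (@rm_embed_morph _ _ _ _ idemE absorbs)).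
rewrite !embed; congr rm_embed.
exact: valid (rm_cs_identities _ _) _ (evalT_homT _ _) (evalT_contT _ _).
Qed.

(** * Completeness *)

Lemma is_omega_om_omega (B : finType) (w : Om B) : is_omega w (om_omega w).
Proof.
move=> [S a]; exists (fsg_n S) => k Sk.
have ev_pow n : ev (om_pow w n) a = spow (@fsg_mul S) (ev w a) n by elim: n => //= n <-.
change (ev (om_pow w (k`!).-1) a = ev (om_omega w) a).
rewrite ev_pow ev_omega; apply: (omega_uniq (@fsg_assoc S) (card_fsg S)).
by apply: (omega_idem (@fsg_assoc S)); rewrite card_ord.
Qed.

Lemma omega_homT (B T : finType) (mul : T -> T -> T) (mulA : associative mul)
    (f : Om B -> T) (w e : Om B) :
  is_homT mul f -> is_contT f -> is_omega w e -> f e = omega mul #|T| (f w).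
Proof.
move=> homf contf lim_e.
have f_pow n : f (om_pow w n) = spow mul (f w) n by elim: n => //= n <-; rewrite homf.
have [L fL] := contf e.
have [N lim_L] : exists N, forall k, N <= k -> agree L (om_pow w (k`!).-1) e.
  elim: L {fL} => [|c L [N IH]]; first by exists 0.
  have [Nc lim_c] := lim_e c.
  by exists (maxn N Nc) => k Nk; split; [apply: lim_c | apply: IH]; lia.
rewrite -(fL (om_pow w ((maxn N #|T|)`!).-1)) ?f_pow; last by apply: lim_L; lia.
by apply: omega_uniq => //; apply: (omega_idem mulA); lia.
Qed.

Theorem h_strong_of_cs (Sg : pid -> Prop) :
  (forall (A : finType) (a : Om A), provable Sg (om_omega a ** a) a) ->
  (forall (A : finType) (a b : Om A), provable Sg (om_omega (a ** b) ** a) a) ->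
  (forall (T : finType) (mul : T -> T -> T), associative mul -> cs_identities mul ->
     models mul Sg) ->
  h_strong Sg.
Proof.
move=> omega_mul_id omega_shift_id cs_models A u v valid.
have [x0 _] := words_dense [::] u.
pose e := kernel_idem (@gens A) (om_omega_idem (om_var x0)).
have idem_e : e ** e = e := kernel_idem_idem _ _.
have rees_uv S (a : A -> 'I_(fsg_n S)) : rees_eval e a u = rees_eval e a v.
  apply: rees_eval_eq; first exact: ev_idem.
  - by move=> i; apply: kernel_idem_absorbs.
  - by move=> T mul mulA cs; apply/valid/cs_models.
pose a0 (b : A) : 'I_(fsg_n (fsg_of (mul := fun x _ => x) (fun _ _ _ => erefl))) := enum_rank b.
apply: (provable_of_rees_core (omega_mul_id A) (omega_shift_id A) idem_e).
- by rewrite -!(rees_eval_first e a0) rees_uv.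
- by rewrite -!(rees_eval_last e a0) rees_uv.
- by apply: om_ext => S a; rewrite /ev /= rees_uv.
Qed.

Lemma provable_axiom (Sg : pid -> Prop) (B A : finType) (l r : Om B) (sg : B -> Om A) :
  Sg (mkpid l r) -> provable Sg (om_subst sg l) (om_subst sg r).
Proof.
move=> Slr; apply: pr_base; exists (mkpid l r), (om_subst sg), (Hole A).
by split=> //; [exact: om_subst_mul | exact: om_subst_cont | left].
Qed.

Lemma models_Sigma (T : finType) (mul : T -> T -> T) :
  associative mul -> cs_identities mul -> models mul SigmaSet.
Proof.
move=> mulA [omega_mul _ omega_sandwich] p.
case=> [[e1 [e2 [lim1 lim2 ->]]] | [e [lim ->]]] /= f homf contf.
- by rewrite (omega_homT mulA homf contf lim1) (omega_homT mulA homf contf lim2) !homf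
    omega_sandwich.
- by rewrite homf (omega_homT mulA homf contf lim) omega_mul.
Qed.

Lemma models_Gamma (T : finType) (mul : T -> T -> T) :
  associative mul -> cs_identities mul -> models mul GammaSet.
Proof.
move=> mulA [_ omega_shift _] p [e [lim ->]] /= f homf contf.
by rewrite homf (omega_homT mulA homf contf lim) homf.
Qed.

Lemma Sigma_omega_mul_axiom : SigmaSet (mkpid (om_omega (om_var tt) ** om_var tt) (om_var tt)).
Proof. by right; exists (om_omega (om_var tt)); split=> //; apply: is_omega_om_omega. Qed.

Lemma Sigma_omega_sandwich_axiom : SigmaSet
  (mkpid (om_omega (om_var true ** om_var false ** om_var true)) (om_omega (om_var true))).
Proof. by left; do 2 eexists; split=> //; apply: is_omega_om_omega. Qed.

Lemma Gamma_axiom :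
  GammaSet (mkpid (om_omega (om_var true ** om_var false) ** om_var true) (om_var true)).
Proof. by eexists; split=> //; apply: is_omega_om_omega. Qed.

Section Instances.
Variable A : finType.
Implicit Types a b : Om A.

Lemma Sigma_omega_mul_id a : provable SigmaSet (om_omega a ** a) a.
Proof.
have := provable_axiom (fun _ => a) Sigma_omega_mul_axiom.
by rewrite om_subst_mul om_subst_omega om_subst_var.
Qed.

Lemma Sigma_omega_sandwich a b : provable SigmaSet (om_omega (a ** b ** a)) (om_omega a).
Proof.
have := provable_axiom (fun x : bool => if x then a else b) Sigma_omega_sandwich_axiom.
by rewrite !om_subst_omega !om_subst_mul !om_subst_var.
Qed.

Lemma Gamma_omega_shift_id a b : provable GammaSet (om_omega (a ** b) ** a) a.
Proof.
have := provable_axiom (fun x : bool => if x then a else b) Gamma_axiom.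
by rewrite !om_subst_mul om_subst_omega !om_subst_mul !om_subst_var.
Qed.

Lemma Gamma_omega_mul_id a : provable GammaSet (om_omega a ** a) a.
Proof. by rewrite -om_omega_sq; apply: Gamma_omega_shift_id. Qed.

#[local] Instance Sigma_equivalence : Equivalence (@provable SigmaSet A) :=
  provable_equivalence Sigma_omega_mul_id.

Lemma Sigma_refl a : provable SigmaSet a a.
Proof. exact: provable_refl Sigma_omega_mul_id a. Qed.

#[local] Hint Resolve Sigma_refl : core.

Lemma Sigma_omega_shift_id a b : provable SigmaSet (om_omega (a ** b) ** a) a.
Proof.
have za : provable SigmaSet (om_omega (a ** b ** a) ** a) a.
  by rewrite Sigma_omega_sandwich Sigma_omega_mul_id.
have abz : provable SigmaSet
    (om_omega (a ** b) ** om_omega (a ** b ** a)) (om_omega (a ** b ** a)).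
  (* (a b a)^ω = (a b) (a (a b a)^(ω-1)) *)
  rewrite -(om_mul_omega_inv (a ** b ** a)) -(om_mulA (a ** b)) om_mulA.
  by rewrite Sigma_omega_mul_id.
transitivity (om_omega (a ** b) ** (om_omega (a ** b ** a) ** a)); first by rewrite za.
by rewrite om_mulA abz za.
Qed.

End Instances.

Theorem theorem9p3 : h_strong SigmaSet /\ h_strong GammaSet.
Proof.
split; apply: h_strong_of_cs.
- exact: Sigma_omega_mul_id.
- exact: Sigma_omega_shift_id.
- exact: models_Sigma.
- exact: Gamma_omega_mul_id.
- exact: Gamma_omega_shift_id.
- exact: models_Gamma.
Qed.
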